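(* Let $k,n\in\mathbb{N}$, $N=\{0,\dots,k\}$, and let $\mathcal{M}_n(N)$ be the set of multisets of cardinality $n$ with elements in $N$. For $x\in\mathcal{M}_n(N)$ let $\overrightarrow{x}$ be the non-decreasing sequence of length $n$ listing the elements of $x$, and let $m=(k,k,\dots,k)$ (length $n$). Define $\rho(x)=\mathrm{rank}(m-\overrightarrow{x})$, where $m-\overrightarrow{x}$ is the entrywise difference (a non-increasing sequence over $N$) and $\mathrm{rank}(x_1,\dots,x_n)=\sum_{i=1}^n\binom{n+x_i-i}{x_i-1}$ (with $\binom{a}{-1}=0$). Then $\rho$ is a bijection from $\mathcal{M}_n(N)$ onto an initial segment $\{0,\dots,|\mathcal{M}_n(N)|-1\}$ of $\mathbb{N}_0$ such that for all $x,y\in\mathcal{M}_n(N)$: $x$ is strictly fairer than $y$ (in the maximization sense) iff $\rho(x)<\rho(y)$.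
   Context: Max-min fair comparison for maximization: $x$ is strictly fairer than $y$ iff $\overrightarrow{y}<_{\mathrm{lex}}\overrightarrow{x}$, where $<_{\mathrm{lex}}$ is the strict lexicographic order on sequences of length $n$. *)

From mathcomp Require Import all_boot.
Set Implicit Arguments. Unset Strict Implicit. Unset Printing Implicit Defensive.

(* A multiset over N = {0,..,k} (k given as the ordinal type 'I_k.+1) is given
   by its multiplicity function.  Multiplicities of a multiset of cardinality n
   are at most n, so we take them in 'I_n.+1 to obtain a finite type. *)
Definition mset (k n : nat) := {ffun 'I_k.+1 -> 'I_n.+1}.

Definition mcard k n (x : mset k n) : nat := \sum_(i < k.+1) (x i : nat).

Definition Mn (k n : nat) : {set mset k n} := [set x | mcard x == n].

Definition melems k n (x : mset k n) : seq nat :=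
  flatten [seq nseq (x i) (i : nat) | i <- enum 'I_k.+1].

Definition vec k n (x : mset k n) : seq nat := sort leq (melems x).

Definition binm1 (a b : nat) : nat := if b == 0 then 0 else 'C(a, b.-1).

(* rank (x_1,...,x_n) = sum_{i=1}^n binom(n + x_i - i, x_i - 1);
   here the 0-indexed position j corresponds to i = j+1 *)
Definition rank (s : seq nat) : nat :=
  \sum_(j < size s) binm1 (size s + nth 0 s j - j.+1) (nth 0 s j).

Definition rho k n (x : mset k n) : nat := rank [seq k - a | a <- vec x].

Definition ltlex (s t : seq nat) : Prop :=
  exists i, [/\ i < size s, i < size t,
                (forall j, j < i -> nth 0 s j = nth 0 t j) & nth 0 s i < nth 0 t i].

(* max-min fairness: x strictly fairer than y iff vec y <lex vec x *)
Definition fairer k n (x y : mset k n) : Prop := ltlex (vec y) (vec x).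

From mathcomp Require Import all_boot zify.

Set Implicit Arguments.
Unset Strict Implicit.
Unset Printing Implicit Defensive.

(* Complementing every entry, [s |-> map (subn k) s], turns the
   non-decreasing listing [vec x] of a multiset x into a non-increasing
   sequence bounded by k, reverses the lexicographic order, and is a
   bijection between M_n(N) and the non-increasing sequences of length n with
   entries at most k.  The theorem is thus the combinatorial number system:
   - [rank] of a non-increasing sequence [v :: s] with entries <= b splits as
     'C(size s + v, (size s).+1) + rank s, and rank s < 'C(size s + b, size s);
     hence [rank] is strictly lexicographically monotone on such sequences
     (the tail can never make up one step of the head term), and greedily
     choosing the head term shows it reaches every value below 'C(n + b, n);
   - the lexicographic order is total, so monotonicity yields injectivity and
     the order equivalence, and injectivity plus surjectivity onto an initial
     segment yields #|M_n(N)| = 'C(n + k, n). *)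

(* Non-increasing sequences bounded by b are exactly the [geq]-paths from b. *)
Notation noninc_le b s := (path geq b s).

Lemma noninc_le_bound b s : noninc_le b s -> all (fun a => a <= b) s.
Proof. by apply: order_path_min => a c d /= le_ac le_da; exact: leq_trans le_da le_ac. Qed.

Definition head_rank (m v : nat) : nat := 'C(m + v, m.+1).

Lemma rank_cons v s : rank (v :: s) = head_rank (size s) v + rank s.
Proof.
rewrite /rank /= big_ord_recl /=; congr (_ + _).
rewrite /binm1 /head_rank; case: v => [|u] /=; first by rewrite addn0 bin_small.
rewrite -(@bin_sub (size s + u.+1) (size s).+1); last by lia.
by congr 'C(_, _); lia.
Qed.

Lemma head_rankS m v : head_rank m v.+1 = head_rank m v + 'C(m + v, m).
Proof. by rewrite /head_rank addnS binS. Qed.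

Lemma head_rank0 m : head_rank m 0 = 0.
Proof. by rewrite /head_rank addn0 bin_small. Qed.

(* The ranks of the non-increasing sequences bounded by b lie below
   'C(size s + b, size s), the number of such sequences. *)
Lemma rank_lt_bin b s : noninc_le b s -> rank s < 'C(size s + b, size s).
Proof.
elim: s b => [|v s IHs] b /=; first by rewrite /rank big_ord0 bin0.
case/andP => le_vb path_s; rewrite rank_cons.
have step : head_rank (size s) v + rank s < head_rank (size s) v.+1.
  by rewrite head_rankS ltn_add2l IHs.
by apply: (leq_trans step); rewrite /head_rank; apply: leq_bin2l; lia.
Qed.

(* Strict lexicographic order as a boolean fixpoint; a sequence is never
   below one of its extensions, exactly as for [ltlex]. *)
Fixpoint lexlt (s t : seq nat) : bool :=
  match s, t with
  | a :: s', b :: t' => (a < b) || ((a == b) && lexlt s' t')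
  | _, _ => false
  end.

Lemma ltlexP s t : ltlex s t <-> lexlt s t.
Proof.
elim: s t => [|a s IHs] [|b t] /=; try by split => // [[i []]].
split.
  case=> [[|i]] [/= lt_is lt_it eq_pre lt_i]; first by rewrite lt_i.
  have /= eq_ab := eq_pre 0 isT; subst b.
  rewrite ltnn eqxx /=; apply/IHs; exists i; split => // j lt_ji.
  exact: (eq_pre j.+1).
case/orP => [lt_ab | /andP [/eqP eq_ab lt_st]]; first by exists 0; split.
subst b; case/IHs: lt_st => i [lt_is lt_it eq_pre lt_i].
by exists i.+1; split => // -[].
Qed.

Lemma lexlt_total s t : size s = size t -> s != t -> lexlt s t || lexlt t s.
Proof.
elim: s t => [|a s IHs] [|b t] //= [eq_size] neq_st.
case: (ltngtP a b) => //= eq_ab; subst b.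
by apply: IHs => //; apply: contraNneq neq_st => ->.
Qed.

Lemma lexlt_compl k s t : all (fun a => a <= k) s -> all (fun a => a <= k) t ->
  lexlt s t = lexlt (map (subn k) t) (map (subn k) s).
Proof.
elim: s t => [|a s IHs] [|b t] //= /andP [le_ak all_s] /andP [le_bk all_t].
rewrite -IHs //; congr (_ || (_ && _)); first by apply/idP/idP; lia.
by apply/eqP/eqP; lia.
Qed.

Lemma rank_mono b s t : size s = size t -> noninc_le b s -> noninc_le b t ->
  lexlt s t -> rank s < rank t.
Proof.
elim: s t b => [|v s IHs] [|w t] b //= [eq_size] /andP [_ path_s] /andP [_ path_t].
rewrite !rank_cons -eq_size => /orP [lt_vw | /andP [/eqP eq_vw lt_st]].
  apply: (@leq_trans (head_rank (size s) v.+1)).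
    by rewrite head_rankS ltn_add2l rank_lt_bin.
  apply: leq_trans (leq_addr _ _); rewrite /head_rank; apply: leq_bin2l; lia.
by subst w; rewrite ltn_add2l (IHs t v).
Qed.

Lemma bracket (f : nat -> nat) b r : f 0 = 0 -> r < f b.+1 ->
  exists v, [/\ v <= b, f v <= r & r < f v.+1].
Proof.
move=> f0; elim: b => [|b IHb] lt_r; first by exists 0; rewrite f0.
case: (ltnP r (f b.+1)) => [/IHb [v [le_vb ? ?]]|le_r]; last by exists b.+1.
by exists v; split => //; lia.
Qed.

(* Every value below 'C(n + b, n) is the rank of a non-increasing sequence of
   length n bounded by b: choose the head greedily, then recurse on the rest. *)
Lemma rank_surj n b r : r < 'C(n + b, n) ->
  exists s, [/\ size s = n, noninc_le b s & rank s = r].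
Proof.
elim: n b r => [|n IHn] b r.
  rewrite bin0 ltnS leqn0 => /eqP ->; exists [::]; split => //.
  by rewrite /rank big_ord0.
move=> lt_r.
have lt_head : r < head_rank n b.+1.
  by move: lt_r; rewrite /head_rank; congr (_ < 'C(_, _)); lia.
have [v [le_vb le_hr lt_hr]] := bracket (head_rank0 n) lt_head.
have : r - head_rank n v < 'C(n + v, n) by move: lt_hr; rewrite head_rankS; lia.
case/IHn => t [size_t path_t rank_t].
exists (v :: t); split => /=; [by rewrite size_t | by rewrite le_vb |].
by rewrite rank_cons size_t rank_t; lia.
Qed.

Lemma compl_noninc k b s : sorted leq s -> all (fun a => k - a <= b) s ->
  noninc_le b (map (subn k) s).
Proof.
elim: s b => [|a s IHs] b //= sorted_as /andP [le_ab all_s]; rewrite le_ab /=.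
apply: IHs; first exact: path_sorted sorted_as.
apply/allP => c c_in; have /allP /(_ c c_in) := order_path_min leq_trans sorted_as.
by rewrite /=; lia.
Qed.

Section MultisetEncoding.

Variables k n : nat.
Implicit Types x y : mset k n.

Lemma count_melems x (a : nat) :
  count_mem a (melems x) = if insub a is Some i then (x i : nat) else 0.
Proof.
rewrite /melems count_flatten -map_comp sumnE big_map.
under eq_bigr => j _ do rewrite /= count_nseq /=.
case: insubP => [i _ <-|not_lt_a].
  rewrite big_enum /= (bigD1 i) //= eqxx mul1n big1 ?addn0 // => j neq_ji.
  by case: eqP => // /val_inj eq_ji; rewrite eq_ji eqxx in neq_ji.
rewrite big1 // => j _; case: eqP => [eq_ja|] //.
by rewrite -eq_ja ltn_ord in not_lt_a.
Qed.

Lemma size_melems x : size (melems x) = mcard x.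
Proof.
rewrite /melems /mcard size_flatten /shape -map_comp sumnE big_map big_enum /=.
by apply: eq_bigr => i _; rewrite size_nseq.
Qed.

Lemma perm_vec x : perm_eq (vec x) (melems x).
Proof. by rewrite /vec perm_sort. Qed.

Lemma vec_inj : injective (@vec k n).
Proof.
move=> x y eq_xy; apply/ffunP => i; apply: val_inj => /=.
have count_vec (z : mset k n) : count_mem (i : nat) (vec z) = z i.
  by rewrite (permP (perm_vec z)) count_melems valK.
by rewrite -count_vec eq_xy count_vec.
Qed.

Lemma vec_bound x : all (fun a => a <= k) (vec x).
Proof.
apply/allP => a; rewrite (perm_mem (perm_vec x)) => a_in.
apply/negPn/negP => not_le_ak.
have : count_mem a (melems x) = 0 by rewrite count_melems insubN.
by move/count_memPn; rewrite a_in.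
Qed.

Definition cvec x : seq nat := map (subn k) (vec x).

Lemma size_cvec x : x \in Mn k n -> size (cvec x) = n.
Proof. by rewrite inE => /eqP <-; rewrite size_map size_sort size_melems. Qed.

Lemma cvec_noninc x : noninc_le k (cvec x).
Proof.
apply: compl_noninc; first exact: (sort_sorted leq_total).
by apply/allP => a _; exact: leq_subr.
Qed.

(* Complementing twice gives back the listing, since its entries are <= k. *)
Lemma compl_cvec x : map (subn k) (cvec x) = vec x.
Proof.
rewrite -map_comp -[RHS]map_id; apply/eq_in_map => a a_in /=.
by have /allP /(_ a a_in) := vec_bound x; lia.
Qed.

Lemma cvec_inj : injective cvec.
Proof. by move=> x y eq_xy; apply: vec_inj; rewrite -!compl_cvec eq_xy. Qed.

(* Every non-increasing sequence of length n bounded by k encodes a multiset: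
   take as multiplicity of i its number of occurrences after complementing. *)
Lemma cvec_surj s : size s = n -> noninc_le k s ->
  exists2 x, x \in Mn k n & cvec x = s.
Proof.
move=> size_s path_s; set t := map (subn k) s.
have count_t (i : 'I_k.+1) : count_mem (i : nat) t < n.+1.
  by rewrite ltnS -size_s -(size_map (subn k)) count_size.
pose x : mset k n := [ffun i => Ordinal (count_t i)].
have perm_t : perm_eq (melems x) t.
  apply/allP => a _; apply/eqP; rewrite count_melems.
  case: insubP => [i _ <-|not_lt_a]; first by rewrite ffunE.
  apply/esym/count_memPn; apply: contra not_lt_a => /mapP [c _ ->] /=; lia.
have vec_x : vec x = t.
  apply: (sorted_eq leq_trans anti_leq); first exact: (sort_sorted leq_total).
    by apply: homo_sorted (path_sorted path_s) => a c /=; exact: leq_sub2l.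
  exact: perm_trans (perm_vec x) perm_t.
exists x; first by rewrite inE -size_melems (perm_size perm_t) size_map size_s.
rewrite /cvec vec_x /t -map_comp -[RHS]map_id; apply/eq_in_map => a a_in /=.
by have /allP /(_ a a_in) := noninc_le_bound path_s; lia.
Qed.

Lemma fairer_cvec x y : fairer x y <-> lexlt (cvec x) (cvec y).
Proof. by rewrite /fairer ltlexP (lexlt_compl (vec_bound y) (vec_bound x)). Qed.

Lemma rho_mono x y : x \in Mn k n -> y \in Mn k n ->
  lexlt (cvec x) (cvec y) -> rho x < rho y.
Proof.
move=> x_in y_in; apply: (rank_mono (b := k)); rewrite ?cvec_noninc //.
by rewrite !size_cvec.
Qed.

Lemma cvec_total x y : x \in Mn k n -> y \in Mn k n -> x != y ->
  lexlt (cvec x) (cvec y) || lexlt (cvec y) (cvec x).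
Proof.
move=> x_in y_in neq_xy; apply: lexlt_total; first by rewrite !size_cvec.
by apply: contra neq_xy => /eqP /cvec_inj ->.
Qed.

Lemma rho_inj : {in Mn k n &, injective (@rho k n)}.
Proof.
move=> x y x_in y_in eq_rho; apply/eqP/negPn/negP => /(cvec_total x_in y_in).
by case/orP => [/(rho_mono x_in y_in) | /(rho_mono y_in x_in)]; rewrite eq_rho ltnn.
Qed.

Lemma fairer_rho x y : x \in Mn k n -> y \in Mn k n ->
  fairer x y <-> rho x < rho y.
Proof.
move=> x_in y_in; rewrite fairer_cvec; split; first exact: rho_mono.
move=> lt_rho; have [eq_xy|neq_xy] := eqVneq x y; first by rewrite eq_xy ltnn in lt_rho.
case/orP: (cvec_total x_in y_in neq_xy) => // /(rho_mono y_in x_in).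
by rewrite ltnNge (ltnW lt_rho).
Qed.

Lemma rho_lt_bin x : x \in Mn k n -> rho x < 'C(n + k, n).
Proof.
by move=> x_in; have := rank_lt_bin (cvec_noninc x); rewrite size_cvec.
Qed.

Lemma rho_surj r : r < 'C(n + k, n) -> exists2 x, x \in Mn k n & rho x = r.
Proof.
case/rank_surj => s [size_s path_s rank_s].
by have [x x_in cvec_x] := cvec_surj size_s path_s; exists x; rewrite // /rho -rank_s -cvec_x.
Qed.

End MultisetEncoding.

Lemma card_onto_iota (T : finType) (A : {set T}) (f : T -> nat) (N : nat) :
  {in A &, injective f} -> (forall x, x \in A -> f x < N) ->
  (forall r, r < N -> exists2 x, x \in A & f x = r) -> #|A| = N.
Proof.
move=> inj_f lt_f onto_f.
have uniq_f : uniq (map f (enum A)).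
  by rewrite map_inj_in_uniq ?enum_uniq // => x y; rewrite !mem_enum; exact: inj_f.
have mem_f : map f (enum A) =i iota 0 N.
  move=> r; rewrite mem_iota add0n; apply/mapP/idP.
    by case=> x; rewrite mem_enum => x_in ->; exact: lt_f.
  by case/onto_f => x x_in <-; exists x; rewrite ?mem_enum.
by rewrite cardE -(size_map f) (perm_size (uniq_perm uniq_f (iota_uniq 0 N) mem_f)) size_iota.
Qed.

Theorem theorem4 (k n : nat) :
  [/\ (forall x, x \in Mn k n -> rho x < #|Mn k n|),
      {in Mn k n &, injective (@rho k n)},
      (forall r, r < #|Mn k n| -> exists2 x, x \in Mn k n & rho x = r)
    & {in Mn k n &, forall x y, fairer x y <-> rho x < rho y}].
Proof.
have card_Mn : #|Mn k n| = 'C(n + k, n).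
  exact: card_onto_iota (@rho_inj k n) (@rho_lt_bin k n) (@rho_surj k n).
rewrite card_Mn; split.
- exact: rho_lt_bin.
- exact: rho_inj.
- exact: rho_surj.
- exact: fairer_rho.
Qed.
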